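(* Let $f:(0,1)\to(0,1)$ be of the form $f(p)=1-\sum_{k=1}^\infty c_k(1-p)^k$ with $c_k\ge 0$ and $\sum_{k=1}^\infty c_k=1$, and let $d_k$ be as defined below. Let $p\in(0,1)$ and let $X_1,X_2,\dots$ be i.i.d. Bernoulli random variables with parameter $p$. Then the output $Y$ of Algorithm 1 (described below) satisfies $\Pr[Y=1]=f(p)$.
   Context: Coefficients: $d_k = c_k/(1-\sum_{j=1}^{k-1}c_j)$ (if $c_K>0$ and $c_k=0$ for all $k>K$, then $d_K=1$ and $d_k$ for $k>K$ is not needed). Algorithm 1: let $U_1,U_2,\dots$ be i.i.d. uniform on $(0,1)$, independent of the $X_i$. Set $i=1$. (2) Take input $X_i$. (3) Let $V_i=1$ if $U_i<d_i$ and $V_i=0$ otherwise. (4) If $V_i=1$ or $X_i=1$, output $Y=X_i$ and stop; otherwise increase $i$ by $1$ and return to step (2). The number of inputs used, $N$, is the value of $i$ at stopping. *)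

From Stdlib Require Import Reals List.
Import ListNotations.
Open Scope R_scope.

Definition bern (q : R) (b : bool) : R := if b then q else 1 - q.

Fixpoint csum (c : nat -> R) (n : nat) : R :=
  match n with O => 0 | S m => csum c m + c (S m) end.

(* d_k = c_k / (1 - sum_{j<k} c_j); when the denominator vanishes the
   coefficient is "not needed" (the algorithm has surely stopped); we set it to 1. *)
Definition dcoef (c : nat -> R) (k : nat) : R :=
  let D := 1 - csum c (k - 1) in
  if Req_EM_T D 0 then 1 else c k / D.

Fixpoint bools (n : nat) : list (list bool) :=
  match n with
  | O => [ [] ]
  | S m => map (cons false) (bools m) ++ map (cons true) (bools m)
  end.

Definition lsum {A} (F : A -> R) (l : list A) : R :=
  fold_right (fun a s => F a + s) 0 l.

(* Joint probability of the prefix (X_i, V_i) = (xs_i, vs_i), i = i0, i0+1, ...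
   where X_i ~ Bernoulli(p), V_i = [U_i < d_i] ~ Bernoulli(d_i), all independent. *)
Fixpoint wt (c : nat -> R) (p : R) (i : nat) (xs vs : list bool) : R :=
  match xs, vs with
  | x :: xs', v :: vs' => bern p x * bern (dcoef c i) v * wt c p (S i) xs' vs'
  | _, _ => 1
  end.

(* Event "Algorithm 1 stops at the last step of the prefix and outputs Y = 1":
   at all earlier steps V_i = 0 and X_i = 0 (no stop), and at the last step X = 1
   (which forces the stop with output X = 1). *)
Fixpoint stop_out1 (xs vs : list bool) : bool :=
  match xs, vs with
  | [x], [v] => x
  | x :: xs', v :: vs' => negb x && negb v && stop_out1 xs' vs'
  | _, _ => false
  end.

(* Pr[N = n+1, Y = 1] *)
Definition prob_stop_out1 (c : nat -> R) (p : R) (n : nat) : R :=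
  lsum (fun xs => lsum (fun vs =>
          wt c p 1 xs vs * (if stop_out1 xs vs then 1 else 0)) (bools (S n)))
       (bools (S n)).

(* The algorithm outputs 1 at step n+1 exactly when X_i = V_i = 0 for i <= n and
   X_{n+1} = 1, an event of probability p (1-p)^n (1-d_1)...(1-d_n).  The d_k are
   chosen so that this product telescopes to 1 - C_n, where C_n = c_1 + ... + c_n.
   Since p (1-p)^n (1 - C_n) = T_n - T_{n+1} - c_{n+1} (1-p)^{n+1} with
   T_n = (1-p)^n (1 - C_n) -> 0, the series sums to 1 - sum_k c_k (1-p)^k = f(p). *)
From Stdlib Require Import Reals Lra Lia List.
Import ListNotations.
Open Scope R_scope.

Lemma lsum_app {A} (F : A -> R) l1 l2 : lsum F (l1 ++ l2) = lsum F l1 + lsum F l2.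
Proof. induction l1 as [|a l1 IH]; simpl; [lra|]. unfold lsum in *; simpl. rewrite IH; lra. Qed.

Lemma lsum_map {A B} (F : B -> R) (g : A -> B) l :
  lsum F (map g l) = lsum (fun a => F (g a)) l.
Proof. induction l as [|a l IH]; simpl; auto. unfold lsum in *; simpl; rewrite IH; auto. Qed.

Lemma lsum_ext_in {A} (F G : A -> R) l :
  (forall a, In a l -> F a = G a) -> lsum F l = lsum G l.
Proof.
  induction l as [|a l IH]; simpl; intros H; auto. unfold lsum in *; simpl.
  rewrite H, IH; auto.
Qed.

Lemma lsum_scal {A} (F : A -> R) k l : lsum (fun a => k * F a) l = k * lsum F l.
Proof. induction l as [|a l IH]; unfold lsum in *; simpl; [lra|]. rewrite IH; lra. Qed.

Lemma lsum_bools_S F m : lsum F (bools (S m)) =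
  lsum (fun l => F (false :: l)) (bools m) + lsum (fun l => F (true :: l)) (bools m).
Proof. simpl. rewrite lsum_app, !lsum_map. reflexivity. Qed.

Lemma bools_length m l : In l (bools m) -> length l = m.
Proof.
  revert l; induction m as [|m IH]; simpl; intros l H.
  - destruct H as [<-|[]]; reflexivity.
  - apply in_app_iff in H; destruct H as [H|H]; apply in_map_iff in H;
      destruct H as [l' [<- H]]; simpl; rewrite (IH l'); auto.
Qed.

Lemma bools_S_neq_nil m l : In l (bools (S m)) -> l <> [].
Proof. intros H ->. apply bools_length in H. discriminate. Qed.

Lemma stop_out1_cons x v xs vs :
  xs <> [] -> stop_out1 (x :: xs) (v :: vs) = (negb x && negb v && stop_out1 xs vs)%bool.
Proof. destruct xs; [congruence | reflexivity]. Qed.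

Section FirstStep.
Variables (c : nat -> R) (p : R).

Definition stop_weight (i : nat) (xs vs : list bool) : R :=
  wt c p i xs vs * (if stop_out1 xs vs then 1 else 0).

Definition stop_sum (i m : nat) (xs : list bool) : R :=
  lsum (stop_weight i xs) (bools m).

Definition prob_stop_from (i n : nat) : R :=
  lsum (stop_sum i (S n)) (bools (S n)).

Lemma stop_weight_cons i x v xs vs : xs <> [] ->
  stop_weight i (x :: xs) (v :: vs) =
  (if (x || v)%bool then 0 else (1 - p) * (1 - dcoef c i)) * stop_weight (S i) xs vs.
Proof.
  intros Hxs. unfold stop_weight. simpl wt. rewrite stop_out1_cons by exact Hxs.
  destruct x, v; simpl; ring.
Qed.

Lemma stop_sum_cons i m x xs : xs <> [] ->
  stop_sum i (S m) (x :: xs) =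
  (if x then 0 else (1 - p) * (1 - dcoef c i)) * stop_sum (S i) m xs.
Proof.
  intros Hxs. unfold stop_sum. rewrite lsum_bools_S.
  rewrite (lsum_ext_in _ _ _ (fun vs _ => stop_weight_cons i x false xs vs Hxs)).
  rewrite (lsum_ext_in _ _ _ (fun vs _ => stop_weight_cons i x true xs vs Hxs)).
  rewrite !lsum_scal. destruct x; simpl; ring.
Qed.

Lemma prob_stop_from_0 i : prob_stop_from i 0 = p.
Proof. unfold prob_stop_from, stop_sum, stop_weight, lsum, wt, bern; simpl. ring. Qed.

Lemma prob_stop_from_S i n :
  prob_stop_from i (S n) = (1 - p) * (1 - dcoef c i) * prob_stop_from (S i) n.
Proof.
  unfold prob_stop_from at 1. rewrite lsum_bools_S.
  rewrite (lsum_ext_in _ _ _ (fun xs Hxs =>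
             stop_sum_cons i (S n) false xs (bools_S_neq_nil n xs Hxs))).
  rewrite (lsum_ext_in _ _ _ (fun xs Hxs =>
             stop_sum_cons i (S n) true xs (bools_S_neq_nil n xs Hxs))).
  rewrite !lsum_scal. unfold prob_stop_from. simpl. ring.
Qed.

End FirstStep.

Fixpoint survival (c : nat -> R) (i n : nat) : R :=
  match n with O => 1 | S m => (1 - dcoef c i) * survival c (S i) m end.

Lemma prob_stop_from_survival c p i n :
  prob_stop_from c p i n = p * (1 - p) ^ n * survival c i n.
Proof.
  revert i; induction n as [|n IH]; intros i.
  - rewrite prob_stop_from_0. simpl. ring.
  - rewrite prob_stop_from_S, IH. simpl. ring.
Qed.

Lemma csum_S_sum_f_R0 c n : csum c (S n) = sum_f_R0 (fun k => c (S k)) n.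
Proof. induction n as [|n IH]; simpl in *; [ring | rewrite <- IH; ring]. Qed.

Section Survival.
Variable c : nat -> R.
Hypothesis hc : forall k, (1 <= k)%nat -> 0 <= c k.
Hypothesis hsum : infinite_sum (fun k => c (S k)) 1.

Lemma csum_le_add k m : csum c k <= csum c (k + m).
Proof.
  induction m as [|m IH]; [rewrite Nat.add_0_r; lra|].
  rewrite Nat.add_succ_r. simpl. assert (0 <= c (S (k + m))) by (apply hc; lia). lra.
Qed.

Lemma csum_ge0 n : 0 <= csum c n.
Proof. exact (csum_le_add 0 n). Qed.

Lemma csum_le1 n : csum c n <= 1.
Proof.
  destruct n as [|n]; [simpl; lra|]. rewrite csum_S_sum_f_R0.
  apply growing_ineq; [|exact hsum].
  intro m. simpl. assert (0 <= c (S (S m))) by (apply hc; lia). lra.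
Qed.

Lemma survival_mul i n : survival c (S i) n * (1 - csum c i) = 1 - csum c (i + n).
Proof.
  revert i; induction n as [|n IH]; intros i; simpl survival.
  - rewrite Nat.add_0_r. ring.
  - unfold dcoef. rewrite Nat.sub_succ, Nat.sub_0_r.
    destruct (Req_EM_T (1 - csum c i) 0) as [E|E].
    + (* C_i = 1 forces C_(i+n+1) = 1 as well *)
      rewrite E. pose proof (csum_le_add i (S n)). pose proof (csum_le1 (i + S n)). lra.
    + rewrite Nat.add_succ_r, <- Nat.add_succ_l, <- IH. simpl csum. field. exact E.
Qed.

Lemma survival_1 n : survival c 1 n = 1 - csum c n.
Proof. pose proof (survival_mul 0 n) as H. simpl in H. lra. Qed.

Lemma prob_stop_out1_closed p n :
  prob_stop_out1 c p n = p * (1 - p) ^ n * (1 - csum c n).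
Proof.
  change (prob_stop_out1 c p n) with (prob_stop_from c p 1 n).
  rewrite prob_stop_from_survival, survival_1. reflexivity.
Qed.

End Survival.

Lemma sum_stop_telescope c p n :
  sum_f_R0 (fun k => p * (1 - p) ^ k * (1 - csum c k)) n =
  1 - ((1 - p) ^ S n * (1 - csum c (S n)) + sum_f_R0 (fun k => c (S k) * (1 - p) ^ S k) n).
Proof. induction n as [|n IH]; simpl sum_f_R0; [|rewrite IH]; simpl; ring. Qed.

Lemma Un_cv_const l : Un_cv (fun _ => l) l.
Proof. intros eps Heps. exists O. intros n _. unfold Rdist. rewrite Rminus_diag, Rabs_R0. lra. Qed.

Lemma Un_cv_pow_0 q : 0 <= q < 1 -> Un_cv (pow q) 0.
Proof.
  intros Hq eps Heps.
  destruct (pow_lt_1_zero q ltac:(rewrite Rabs_right; lra) eps Heps) as [N HN].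
  exists N. intros n Hn. unfold Rdist. rewrite Rminus_0_r. exact (HN n Hn).
Qed.

Lemma Un_cv_squeeze_0 (u v : nat -> R) :
  (forall n, 0 <= u n <= v n) -> Un_cv v 0 -> Un_cv u 0.
Proof.
  intros Huv Hv eps Heps. destruct (Hv eps Heps) as [N HN]. exists N. intros n Hn.
  specialize (HN n Hn). specialize (Huv n). unfold Rdist in *.
  rewrite Rminus_0_r in *. rewrite Rabs_right in * by lra. lra.
Qed.

Theorem theorem1 (c : nat -> R)
  (hc : forall k, (1 <= k)%nat -> 0 <= c k)
  (hsum : infinite_sum (fun k => c (S k)) 1)
  (p : R) (hp : 0 < p < 1)
  (s : R) (hs : infinite_sum (fun k => c (S k) * (1 - p) ^ (S k)) s) :
  infinite_sum (prob_stop_out1 c p) (1 - s).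
Proof.
  set (tail := fun n => (1 - p) ^ S n * (1 - csum c (S n))).
  assert (Htail : Un_cv tail 0).
  { apply (Un_cv_squeeze_0 _ (pow (1 - p))); [|apply Un_cv_pow_0; lra].
    intro n. unfold tail. rewrite <- tech_pow_Rmult.
    pose proof (csum_ge0 c hc (S n)). pose proof (csum_le1 c hc hsum (S n)).
    assert (0 <= (1 - p) ^ n) by (apply pow_le; lra).
    assert (0 <= (1 - p) * (1 - csum c (S n)) <= 1) by (split; nra).
    split; nra. }
  apply (Un_cv_ext (fun n => 1 - (tail n + sum_f_R0 (fun k => c (S k) * (1 - p) ^ S k) n))).
  { intro n. unfold tail. rewrite <- sum_stop_telescope. apply sum_eq. intros k _.
    symmetry. apply prob_stop_out1_closed; assumption. }
  replace (1 - s) with (1 - (0 + s)) by ring.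
  apply CV_minus; [apply Un_cv_const | apply CV_plus; assumption].
Qed.
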